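(* Let $\{a,b,\gamma,\delta\}$ be a coupled SUSY system. Then $a^{\dagger}b$ and $b^{\dagger}a$ act as (raising and lowering) ladder operators for $a^{\dagger}a$ and for $b^{\dagger}b$, and $ba^{\dagger}$ and $ab^{\dagger}$ act as (raising and lowering) ladder operators for $aa^{\dagger}$ and for $bb^{\dagger}$. Namely, $$[a^{\dagger}a,a^{\dagger}b]=(\delta-\gamma)a^{\dagger}b,\quad [a^{\dagger}a,b^{\dagger}a]=-(\delta-\gamma)b^{\dagger}a,\quad [aa^{\dagger},ba^{\dagger}]=(\delta-\gamma)ba^{\dagger},\quad [aa^{\dagger},ab^{\dagger}]=-(\delta-\gamma)ab^{\dagger},$$ and the same relations hold with $a^{\dagger}a$ replaced by $b^{\dagger}b$ and $aa^{\dagger}$ replaced by $bb^{\dagger}$. Moreover, the triples $\{a^{\dagger}a-\tfrac{\gamma}{2},\,a^{\dagger}b,\,b^{\dagger}a\}$ and $\{aa^{\dagger}-\tfrac{\delta}{2},\,ab^{\dagger},\,ba^{\dagger}\}$ each generate a Lie algebra (under the commutator) isomorphic to $\mathfrak{su}(1,1)$: the operators $$\mathcal K_+=\tfrac{1}{\delta-\gamma}a^{\dagger}b,\quad \mathcal K_-=\tfrac{1}{\delta-\gamma}b^{\dagger}a,\quad \mathcal K_0=\tfrac{1}{\delta-\gamma}\big(a^{\dagger}a-\tfrac{\gamma}{2}\big)$$ satisfy $[\mathcal K_0,\mathcal K_\pm]=\pm\mathcal K_\pm$ and $[\mathcal K_+,\mathcal K_-]=-2\mathcal K_0$, and likewise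 $\widetilde{\mathcal K}_+=\tfrac{1}{\delta-\gamma}ba^{\dagger}$, $\widetilde{\mathcal K}_-=\tfrac{1}{\delta-\gamma}ab^{\dagger}$, $\widetilde{\mathcal K}_0=\tfrac{1}{\delta-\gamma}\big(aa^{\dagger}-\tfrac{\delta}{2}\big)$ satisfy the same relations.
   Context: Let $\mathfrak H$ be a Hilbert space. A coupled SUSY system is an ordered quadruple $\{a,b,\gamma,\delta\}$ where $a,b$ are closed, densely defined operators on $\mathfrak H$ with adjoints $a^{\dagger},b^{\dagger}$, and $\gamma,\delta\in\mathbb R$ with $\gamma<\delta$, such that $\operatorname{dom}a=\operatorname{dom}b$, $\operatorname{dom}a^{\dagger}=\operatorname{dom}b^{\dagger}$, $\operatorname{ran}a\subseteq\operatorname{dom}a^{\dagger}$ and $\operatorname{ran}a^{\dagger}\subseteq\operatorname{dom}a$, similarly $\operatorname{ran}b\subseteq\operatorname{dom}b^{\dagger}$ and $\operatorname{ran}b^{\dagger}\subseteq\operatorname{dom}b$, and $$a^{\dagger}a=b^{\dagger}b+\gamma,\qquad aa^{\dagger}=bb^{\dagger}+\delta.$$ $[X,Y]=XY-YX$ denotes the commutator; operator identities are understood as formal identities on a suitable common domain. An operator $L$ is called a ladder operator for $H$ if $[H,L]=cL$ for a nonzero real constant $c$ (raising if $c>0$, lowering if $c<0$). *)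

From mathcomp Require Import all_boot all_order all_algebra.
Set Implicit Arguments. Unset Strict Implicit. Unset Printing Implicit Defensive.
Import Order.TTheory GRing.Theory Num.Theory.
Local Open Scope ring_scope.

(* Operators are modelled as elements of an algebra A over a real field R
   (the algebra of operators acting on a suitable common domain); identities
   are formal algebraic identities. *)

Definition commr (A : ringType) (x y : A) : A := x * y - y * x.

Definition is_adjoint (R : realFieldType) (A : lalgType R) (dag : A -> A) : Prop :=
  [/\ forall x, dag (dag x) = x,
      forall x y, dag (x + y) = dag x + dag y,
      forall x y, dag (x * y) = dag y * dag x,
      forall (c : R) x, dag (c *: x) = c *: dag x
    & dag 1 = 1].

Definition coupled_susy (R : realFieldType) (A : lalgType R) (dag : A -> A)
    (a b : A) (gamma delta : R) : Prop :=
  [/\ is_adjoint dag,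
      gamma < delta,
      dag a * a = dag b * b + gamma%:A
    & a * dag a = b * dag b + delta%:A].

Definition su11_rel (R : realFieldType) (A : lalgType R) (K0 Kp Km : A) : Prop :=
  [/\ commr K0 Kp = Kp, commr K0 Km = - Km & commr Kp Km = - (2 : R) *: K0].

From mathcomp Require Import all_boot all_order all_algebra.
From mathcomp Require Import ring.
Import Order.TTheory GRing.Theory Num.Theory.
Local Open Scope ring_scope.
Set Implicit Arguments. Unset Strict Implicit.

(* Everything follows from pushing a factorization through a product: if
   s t = u v + g and t s = v u + e, then
     (s t)(s v) = s (v u + e) v = (s v)(u v) + e s v,
     (s v)(s t) = (s v)(u v + g) = (s v)(u v) + g s v,
   so s v raises s t by e - g.  The hypotheses are invariant under
   (s, t, u, v, g, e) -> (u, v, s, t, -g, -e) and (t, s, v, u, e, g), which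
   yields the lowering operator u t and the relations for t s.  The coupled
   SUSY system gives (a^dag, a, b^dag, b, gamma, delta) and
   (b^dag, b, a^dag, a, -gamma, -delta).  Likewise
   [s v, u t] = -(e - g)(s t + u v) = -2(e - g)(s t - g/2), which closes
   the su(1,1) relations after rescaling by (e - g)^-1. *)

Lemma opp_commr (A : nzRingType) (x y : A) : - commr x y = commr y x.
Proof. by rewrite /commr opprB. Qed.

Lemma commrNN (A : nzRingType) (x y : A) : commr (- x) (- y) = commr x y.
Proof. by rewrite /commr !mulrNN. Qed.

Lemma subr_sqr_alg (R : nzRingType) (A : lalgType R) (c : R) (x y : A) :
  (forall z : A, z * c%:A = c *: z) ->
  x = y + c%:A -> x * x - y * y = c *: (x + y).
Proof.
move=> mul_c_r x_def.
have -> : x * x - y * y = (x - y) * x + y * (x - y).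
  by rewrite mulrBl mulrBr addrA subrK.
have -> : x - y = c%:A by rewrite x_def addrAC subrr add0r.
by rewrite mulr_algl mul_c_r scalerDr.
Qed.

Lemma su11_rel_opp (R : realFieldType) (A : lalgType R) (K0 Kp Km : A) :
  su11_rel K0 Kp Km -> su11_rel (- K0) (- Km) (- Kp).
Proof.
case=> Kp_raise Km_lower Kp_Km; split; rewrite commrNN //.
- by rewrite Kp_raise opprK.
- by rewrite -opp_commr Kp_Km scalerN.
Qed.

Section AdjointAlgebra.

Variables (R : realFieldType) (A : lalgType R) (dag : A -> A).
Hypothesis dagA : is_adjoint dag.

(* A left algebra only has (c *: x) * y = c *: (x * y); the real-linear
   anti-automorphism dag transfers it to the right factor. *)
Lemma adjoint_scalerAr (c : R) (x y : A) : x * (c *: y) = c *: (x * y).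
Proof.
case: dagA => dagK _ dagM dagZ _.
by rewrite -[LHS]dagK dagM dagZ -scalerAl dagZ dagM !dagK.
Qed.

Lemma adjoint_mulr_algr (c : R) (x : A) : x * c%:A = c *: x.
Proof. by rewrite adjoint_scalerAr mulr1. Qed.

Lemma commrZ (k l : R) (x y : A) :
  commr (k *: x) (l *: y) = (k * l) *: commr x y.
Proof.
by rewrite /commr -!scalerAl !adjoint_scalerAr !scalerA mulrC scalerBr.
Qed.

Lemma commr_addalgl (c : R) (x y : A) : commr (x + c%:A) y = commr x y.
Proof.
rewrite /commr mulrDl mulrDr mulr_algl adjoint_mulr_algr.
by rewrite opprD addrACA subrr addr0.
Qed.

Lemma su11_rel_scale (d : R) (H Y Z : A) : d != 0 ->
  commr H Y = d *: Y -> commr H Z = - d *: Z ->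
  commr Y Z = - (2 * d) *: H ->
  su11_rel (d^-1 *: H) (d^-1 *: Y) (d^-1 *: Z).
Proof.
move=> d_neq0 HY HZ YZ; split; rewrite commrZ ?HY ?HZ ?YZ -?scaleNr !scalerA;
  by congr (_ *: _); field.
Qed.

Section Ladder.

Variables (s t u v : A) (g e : R).
Hypotheses (st_def : s * t = u * v + g%:A) (ts_def : t * s = v * u + e%:A).

Lemma ladder_raise : commr (s * t) (s * v) = (e - g) *: (s * v).
Proof.
rewrite /commr.
have -> : s * t * (s * v) = s * v * (u * v) + e *: (s * v).
  rewrite mulrA -(mulrA s t s) ts_def mulrDr mulrDl adjoint_mulr_algr.
  by rewrite -scalerAl !mulrA.
have -> : s * v * (s * t) = s * v * (u * v) + g *: (s * v).
  by rewrite st_def mulrDr adjoint_mulr_algr.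
by rewrite opprD addrACA subrr add0r scalerBl.
Qed.

Lemma ladder_crossed : commr (s * v) (u * t) = - (e - g) *: (s * t + u * v).
Proof.
have vu_def : v * u = t * s - e%:A by rewrite ts_def addrK.
rewrite /commr.
have -> : s * v * (u * t) = s * t * (s * t) - e *: (s * t).
  rewrite mulrA -(mulrA s v u) vu_def mulrBr mulrBl adjoint_mulr_algr.
  by rewrite -scalerAl !mulrA.
have -> : u * t * (s * v) = u * v * (u * v) + e *: (u * v).
  rewrite mulrA -(mulrA u t s) ts_def mulrDr mulrDl adjoint_mulr_algr.
  by rewrite -scalerAl !mulrA.
rewrite opprD addrACA (subr_sqr_alg (adjoint_mulr_algr g) st_def).
by rewrite -opprD -scalerDr -scalerBl opprB.
Qed.

End Ladder.

Lemma ladder_lower (s t u v : A) (g e : R) :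
  s * t = u * v + g%:A -> t * s = v * u + e%:A ->
  commr (s * t) (u * t) = - (e - g) *: (u * t).
Proof.
move=> st_def ts_def.
have uv_def : u * v = s * t + (- g)%:A by rewrite st_def scaleNr addrK.
have vu_def : v * u = t * s + (- e)%:A by rewrite ts_def scaleNr addrK.
rewrite st_def commr_addalgl (ladder_raise uv_def vu_def).
by rewrite opprB opprK addrC.
Qed.

Section CoupledPair.

Variables (s t u v : A) (g e : R).
Hypotheses (st_def : s * t = u * v + g%:A) (ts_def : t * s = v * u + e%:A).

Lemma ladder_relations :
  [/\ commr (s * t) (s * v) = (e - g) *: (s * v),
      commr (s * t) (u * t) = - (e - g) *: (u * t),
      commr (t * s) (v * s) = (e - g) *: (v * s)
    & commr (t * s) (t * u) = - (e - g) *: (t * u)].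
Proof.
split.
- exact: (ladder_raise st_def ts_def).
- exact: (ladder_lower st_def ts_def).
- by rewrite (ladder_lower ts_def st_def) opprB.
- by rewrite (ladder_raise ts_def st_def) opprB.
Qed.

Lemma su11_rel_coupled : g != e ->
  su11_rel ((e - g)^-1 *: (s * t - (g / 2)%:A))
           ((e - g)^-1 *: (s * v)) ((e - g)^-1 *: (u * t)).
Proof.
move=> neq_ge; apply: su11_rel_scale; first by rewrite subr_eq0 eq_sym.
- by rewrite -scaleNr commr_addalgl (ladder_raise st_def ts_def).
- by rewrite -scaleNr commr_addalgl (ladder_lower st_def ts_def).
rewrite (ladder_crossed st_def ts_def).
have -> : s * t + u * v = (2 : R) *: (s * t - (g / 2)%:A).
  rewrite scalerBr scalerA mulrC divfK ?pnatr_eq0 // scaler_nat mulr2n -addrA.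
  by congr (_ + _); rewrite st_def addrK.
by rewrite scalerA mulNr mulrC.
Qed.

End CoupledPair.

Lemma su11_rel_coupled_dual (s t u v : A) (g e : R) :
  s * t = u * v + g%:A -> t * s = v * u + e%:A -> g != e ->
  su11_rel ((e - g)^-1 *: (t * s - (e / 2)%:A))
           ((e - g)^-1 *: (v * s)) ((e - g)^-1 *: (t * u)).
Proof.
move=> st_def ts_def neq_ge.
have oppZ x : - ((g - e)^-1 *: x) = (e - g)^-1 *: x.
  by rewrite -scaleNr -invrN opprB.
have := su11_rel_opp (su11_rel_coupled ts_def st_def _).
by rewrite eq_sym !oppZ; apply.
Qed.

End AdjointAlgebra.

Theorem theorem1 (R : realFieldType) (A : lalgType R) (dag : A -> A)
    (a b : A) (gamma delta : R) :
  coupled_susy dag a b gamma delta ->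
  let d := delta - gamma in
  (* ladder relations, with explicit (signed) commutators *)
  (commr (dag a * a) (dag a * b) = d *: (dag a * b) /\
   commr (dag a * a) (dag b * a) = - d *: (dag b * a) /\
   commr (a * dag a) (b * dag a) = d *: (b * dag a) /\
   commr (a * dag a) (a * dag b) = - d *: (a * dag b) /\
   commr (dag b * b) (dag a * b) = d *: (dag a * b) /\
   commr (dag b * b) (dag b * a) = - d *: (dag b * a) /\
   commr (b * dag b) (b * dag a) = d *: (b * dag a) /\
   commr (b * dag b) (a * dag b) = - d *: (a * dag b)) /\
  (* su(1,1) relations for the two triples *)
  su11_rel (d^-1 *: (dag a * a - (gamma / 2)%:A))
           (d^-1 *: (dag a * b)) (d^-1 *: (dag b * a)) /\
  su11_rel (d^-1 *: (a * dag a - (delta / 2)%:A))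
           (d^-1 *: (b * dag a)) (d^-1 *: (a * dag b)).
Proof.
case=> dagA lt_gd aa_def aa'_def d.
have neq_gd : gamma != delta by rewrite lt_eqF.
have bb_def : dag b * b = dag a * a + (- gamma)%:A.
  by rewrite aa_def scaleNr addrK.
have bb'_def : b * dag b = a * dag a + (- delta)%:A.
  by rewrite aa'_def scaleNr addrK.
have [La1 La2 La3 La4] := ladder_relations dagA aa_def aa'_def.
have [Lb1 Lb2 Lb3 Lb4] := ladder_relations dagA bb_def bb'_def.
have opp_d : - delta - - gamma = - d by rewrite opprK addrC opprB.
rewrite opp_d opprK in Lb1 Lb2 Lb3 Lb4.
split; first by do !split.
split; first exact: (su11_rel_coupled dagA aa_def aa'_def neq_gd).
exact: (su11_rel_coupled_dual dagA aa_def aa'_def neq_gd).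
Qed.
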